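(* Let $P$ and $Q$ be probability distributions on a nonempty set $\mathcal{X}\subseteq\mathbb{R}^d$, let $c\in(0,1)$, and let $h:\mathcal{X}\to\mathbb{R}$ be a fixed measurable function with $\mathbb{E}_{X\sim P}[h(X)^2]<\infty$, $\mathbb{E}_{Y\sim Q}[h(Y)^2]<\infty$ and $\sigma_c(h)>0$. For $\gamma,\nu\in\mathbb{R}$ consider the linearly transformed function $\gamma h+\nu$, and let $(\gamma^*,\nu^* )$ be the minimum of the quadratic function $(\gamma,\nu)\mapsto L_{P,Q,c}(\gamma h+\nu)$. Then $$L_{P,Q,c}(\gamma^* h+\nu^* )=\frac{c(1-c)}{1+\mathrm{SNR}(h)^2}.$$
   Context: For a measurable $h:\mathcal{X}\to\mathbb{R}$ with finite second moments under $P$ and $Q$, define: the mean discrepancy $\tau(P,Q\mid h)=\mathbb{E}_{X\sim P}[h(X)]-\mathbb{E}_{Y\sim Q}[h(Y)]$; the variance term $\sigma_c^2(h)=\dfrac{(1-c)\,\mathrm{Var}_{X\sim P}[h(X)]+c\,\mathrm{Var}_{Y\sim Q}[h(Y)]}{c(1-c)}$ with $\sigma_c(h)\ge 0$ its square root; the signal-to-noise ratio $\mathrm{SNR}(h)=\tau(P,Q\mid h)/\sigma_c(h)$ (defined when $\sigma_c(h)>0$); and the weighted squared loss $L_{P,Q,c}(h)=(1-c)\,\mathbb{E}_{X\sim P}[(1-h(X))^2]+c\,\mathbb{E}_{Y\sim Q}[h(Y)^2]$. *)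

From HB Require Import structures.
From mathcomp Require Import all_boot all_order all_algebra.
From mathcomp Require Import all_classical all_reals all_analysis.
Set Implicit Arguments. Unset Strict Implicit. Unset Printing Implicit Defensive.
Import Order.TTheory GRing.Theory Num.Theory.
Local Open Scope ring_scope.

Section Defs.
Context (d : measure_display) (T : measurableType d) (R : realType).

(* E_{X ~ P}[f(X)] as a real number (meaningful when f is P-integrable). *)
Definition mean (P : probability T R) (f : T -> R) : R :=
  fine (\int[P]_x (f x)%:E).

Definition var (P : probability T R) (f : T -> R) : R :=
  mean P (fun x => (f x - mean P f) ^+ 2).

Definition tau (P Q : probability T R) (h : T -> R) : R :=
  mean P h - mean Q h.

Definition sigma2 (P Q : probability T R) (c : R) (h : T -> R) : R :=
  ((1 - c) * var P h + c * var Q h) / (c * (1 - c)).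

Definition sigma (P Q : probability T R) (c : R) (h : T -> R) : R :=
  Num.sqrt (sigma2 P Q c h).

Definition SNR (P Q : probability T R) (c : R) (h : T -> R) : R :=
  tau P Q h / sigma P Q c h.

Definition Lloss (P Q : probability T R) (c : R) (h : T -> R) : R :=
  (1 - c) * mean P (fun x => (1 - h x) ^+ 2) + c * mean Q (fun x => h x ^+ 2).

End Defs.

(* Expanding the squares, L(gamma h + nu) is a quadratic polynomial in (gamma, nu)
   whose coefficients are the first two moments of h under P and Q.  Completing
   the square in nu leaves c(1-c) ((1 - gamma tau)^2 + sigma^2 gamma^2), and
   completing the square in gamma shows that its minimum is
   c(1-c) sigma^2 / (sigma^2 + tau^2) = c(1-c) / (1 + SNR^2). *)
From HB Require Import structures.
From mathcomp Require Import all_boot all_order all_algebra.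
From mathcomp Require Import all_classical all_reals all_analysis.
From mathcomp Require Import ring lra measurable_realfun.
Import Order.TTheory GRing.Theory Num.Theory.
Local Open Scope ring_scope.

Section square_integrable.
Context (d : measure_display) (T : measurableType d) (R : realType).

Lemma integrable_of_sqr {mu : {finite_measure set T -> \bar R}} {h : T -> R} :
  measurable_fun setT h -> mu.-integrable setT (fun x => (h x ^+ 2)%:E) ->
  mu.-integrable setT (EFin \o h).
Proof.
move=> mh ih2.
apply: (@le_integrable _ _ _ mu setT measurableT _ (EFin \o (fun x => 1 + h x ^+ 2))).
- exact/measurable_EFinP.
- move=> x _ /=; rewrite lee_fin [leRHS]ger0_norm ?addr_ge0 ?sqr_ge0 //.
  have := normr_ge0 (h x); have := real_normK (num_real (h x)); nra.
- have -> : EFin \o (fun x => 1 + h x ^+ 2) = (EFin \o cst 1) \+ (fun x => (h x ^+ 2)%:E).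
    by apply/funext => x /=; rewrite EFinD.
  by apply: integrableD => //; exact: finite_measure_integrable_cst.
Qed.

Variables (P : probability T R) (h : T -> R).
Hypotheses (mh : measurable_fun setT h)
  (ih2 : P.-integrable setT (fun x => (h x ^+ 2)%:E)).

Lemma mean_quadratic (al be ga : R) :
  mean P (fun x => al + be * h x + ga * h x ^+ 2) =
  al + be * mean P h + ga * mean P (fun x => h x ^+ 2).
Proof.
have ih := integrable_of_sqr mh ih2.
have ic : P.-integrable setT (EFin \o cst al) by exact: finite_measure_integrable_cst.
have i1 : P.-integrable setT (EFin \o (fun x => be * h x)).
  by rewrite (_ : _ \o _ = (fun x => be%:E * (EFin \o h) x)%E);
    [exact: integrableZl | apply/funext => x; rewrite /= EFinM].
have i2 : P.-integrable setT (EFin \o (fun x => ga * h x ^+ 2)).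
  by rewrite (_ : _ \o _ = (fun x => ga%:E * (h x ^+ 2)%:E)%E);
    [exact: integrableZl | apply/funext => x; rewrite /= EFinM].
have i01 : P.-integrable setT (EFin \o (fun x => al + be * h x)).
  by rewrite (_ : _ \o _ = (EFin \o cst al) \+ (EFin \o (fun x => be * h x)));
    [exact: integrableD | apply/funext => x; rewrite /= EFinD].
rewrite /mean -!/(Rintegral _ _ _) RintegralD // RintegralD //.
have P1 : fine (P setT) = 1 by rewrite probability_setT.
by rewrite !RintegralZl // Rintegral_cst // P1 mulr1.
Qed.

Lemma mean_sqr_affine (u v : R) :
  mean P (fun x => (u + v * h x) ^+ 2) = (u + v * mean P h) ^+ 2 + v ^+ 2 * var P h.
Proof.
rewrite /var (_ : (fun x => (u + v * h x) ^+ 2) =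
  (fun x => u ^+ 2 + 2 * u * v * h x + v ^+ 2 * h x ^+ 2)); last first.
  by apply/funext => x; ring.
rewrite (_ : (fun x => (h x - mean P h) ^+ 2) =
  (fun x => mean P h ^+ 2 + - (2 * mean P h) * h x + 1 * h x ^+ 2)); last first.
  by apply/funext => x; ring.
rewrite !mean_quadratic; ring.
Qed.

End square_integrable.

Lemma sqr_ridge_complete (R : fieldType) (s t g : R) : s + t ^+ 2 != 0 ->
  (1 - g * t) ^+ 2 + s * g ^+ 2 =
  (s + t ^+ 2) * (g - t / (s + t ^+ 2)) ^+ 2 + s / (s + t ^+ 2).
Proof. by move=> st0; field. Qed.

Lemma sqr_ridge_ge (R : realFieldType) (s t g : R) : 0 < s ->
  s / (s + t ^+ 2) <= (1 - g * t) ^+ 2 + s * g ^+ 2.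
Proof.
move=> s_gt0; have st_gt0 : 0 < s + t ^+ 2 by rewrite ltr_wpDr ?sqr_ge0.
by rewrite sqr_ridge_complete ?gt_eqF // lerDr mulr_ge0 ?sqr_ge0 ?ltW.
Qed.

Lemma sqr_ridge_opt (R : fieldType) (s t : R) : s + t ^+ 2 != 0 ->
  let g := t / (s + t ^+ 2) in (1 - g * t) ^+ 2 + s * g ^+ 2 = s / (s + t ^+ 2).
Proof. by move=> st0 g; rewrite sqr_ridge_complete // subrr expr0n mulr0 add0r. Qed.

Lemma Lloss_affineE (R : realType) (d : measure_display) (T : measurableType d)
    (P Q : probability T R) (c : R) (h : T -> R) (g n : R) :
  c * (1 - c) != 0 -> measurable_fun setT h ->
  P.-integrable setT (fun x => (h x ^+ 2)%:E) ->
  Q.-integrable setT (fun x => (h x ^+ 2)%:E) ->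
  Lloss P Q c (fun x => g * h x + n) =
  (n - ((1 - c) * (1 - g * mean P h) - c * g * mean Q h)) ^+ 2
  + c * (1 - c) * ((1 - g * tau P Q h) ^+ 2 + sigma2 P Q c h * g ^+ 2).
Proof.
move=> cc0 mh iP iQ; rewrite /Lloss /sigma2 /tau.
rewrite (_ : (fun x => (1 - (g * h x + n)) ^+ 2) = (fun x => (1 - n + - g * h x) ^+ 2));
  last by apply/funext => x; ring.
rewrite (_ : (fun x => (g * h x + n) ^+ 2) = (fun x => (n + g * h x) ^+ 2));
  last by apply/funext => x; ring.
rewrite !mean_sqr_affine //; field.
by rewrite -negb_or -mulf_eq0 mulrC.
Qed.

Theorem lemma1 (R : realType) (d : measure_display) (T : measurableType d)
  (P Q : probability T R) (c : R) (h : T -> R) :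
  0 < c < 1 ->
  measurable_fun setT h ->
  P.-integrable setT (fun x => ((h x) ^+ 2)%:E) ->
  Q.-integrable setT (fun x => ((h x) ^+ 2)%:E) ->
  0 < sigma P Q c h ->
  (exists gn : R * R, forall g n : R,
      Lloss P Q c (fun x => gn.1 * h x + gn.2) <= Lloss P Q c (fun x => g * h x + n)) /\
  (forall gs ns : R,
      (forall g n : R,
        Lloss P Q c (fun x => gs * h x + ns) <= Lloss P Q c (fun x => g * h x + n)) ->
      Lloss P Q c (fun x => gs * h x + ns) = c * (1 - c) / (1 + SNR P Q c h ^+ 2)).
Proof.
move=> /andP[c_gt0 c_lt1] mh iP iQ sigma_gt0.
have cc_gt0 : 0 < c * (1 - c) by rewrite mulr_gt0 // subr_gt0.
have s_gt0 : 0 < sigma2 P Q c h by rewrite -sqrtr_gt0.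
set s := sigma2 P Q c h; set t := tau P Q h.
have st_gt0 : 0 < s + t ^+ 2 by rewrite ltr_wpDr ?sqr_ge0.
pose L g n := Lloss P Q c (fun x => g * h x + n).
pose m := c * (1 - c) * (s / (s + t ^+ 2)).
have L_ge g n : m <= L g n.
  rewrite /L Lloss_affineE ?gt_eqF // -/s -/t ler_wpDl ?sqr_ge0 //.
  by rewrite ler_pM2l // sqr_ridge_ge.
pose g0 := t / (s + t ^+ 2).
pose n0 := (1 - c) * (1 - g0 * mean P h) - c * g0 * mean Q h.
have L_opt : L g0 n0 = m.
  by rewrite /L Lloss_affineE ?gt_eqF // -/s -/t subrr expr0n add0r sqr_ridge_opt ?gt_eqF.
split; first by exists (g0, n0) => g n; rewrite -[leLHS]/(L g0 n0) L_opt; exact: L_ge.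
move=> gs ns gs_min; rewrite -/(L gs ns).
have -> : L gs ns = m by apply/le_anti; rewrite L_ge -L_opt gs_min.
rewrite /m /SNR /sigma -/s -/t expr_div_n sqr_sqrtr ?ltW //.
by field; rewrite !gt_eqF // ltr_wpDr ?sqr_ge0 ?divr_ge0 ?ltW.
Qed.
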